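(* For every $k\in\mathbb{N}$, $$L_{\mathbb{R},4k}\ge\left[\sum_{j=0}^{2k}\binom{4k}{2j}\left|\frac{B_j}{\binom{4k}{2j}}\right|^{\frac{8k}{4k+1}}\right]^{\frac{4k+1}{8k}},$$ where $$B_j=\sum_{\ell=0}^{\lfloor j/2\rfloor}\frac{k!\,(-3)^{j-2\ell}}{\ell!\,(j-2\ell)!\,(k-j+\ell)!},\qquad j=0,\dots,2k$$ (terms with $k-j+\ell<0$ being $0$); the $B_j$ are the coefficients of $x^{2j}y^{4k-2j}$ in $(x^4+y^4-3x^2y^2)^k$.
   Context: All spaces are real. $\check P$ is the polar of an $m$-homogeneous polynomial $P$ (the unique symmetric $m$-linear form with $\check P(x,\dots,x)=P(x)$). For $x_1,\dots,x_N$ in a Banach space $X$, $\|(x_j)\|_{w,1}=\sup\{\sum_j|\varphi(x_j)|:\varphi\in X',\|\varphi\|\le1\}$. $L_{\mathbb{R},m}$ is the smallest constant $L$ such that for every real Banach space $X$, every continuous $m$-homogeneous $P:X\to\mathbb{R}$, every $N$ and all $x^{(k)}_j\in X$: $\big(\sum_{j_1,\dots,j_m=1}^N|\check P(x^{(1)}_{j_1},\dots,x^{(m)}_{j_m})|^{\frac{2m}{m+1}}\big)^{\frac{m+1}{2m}}\le L\|P\|\prod_{k=1}^m\|(x^{(k)}_j)_{j=1}^N\|_{w,1}$. $\lfloor h\rfloor$ is the integer part. *)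

From Stdlib Require Import Reals Lra Lia Arith Factorial.
Open Scope R_scope.

Record RBanach := {
  vcar :> Type;
  vzero : vcar;
  vadd : vcar -> vcar -> vcar;
  vopp : vcar -> vcar;
  vscal : R -> vcar -> vcar;
  vnorm : vcar -> R;
  vadd_assoc : forall x y z, vadd x (vadd y z) = vadd (vadd x y) z;
  vadd_comm : forall x y, vadd x y = vadd y x;
  vadd_0 : forall x, vadd x vzero = x;
  vadd_opp : forall x, vadd x (vopp x) = vzero;
  vscal_1 : forall x, vscal 1 x = x;
  vscal_assoc : forall a b x, vscal a (vscal b x) = vscal (a * b) x;
  vscal_distr_v : forall a x y, vscal a (vadd x y) = vadd (vscal a x) (vscal a y);
  vscal_distr_s : forall a b x, vscal (a + b) x = vadd (vscal a x) (vscal b x);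
  vnorm_nonneg : forall x, 0 <= vnorm x;
  vnorm_eq0 : forall x, vnorm x = 0 -> x = vzero;
  vnorm_scal : forall a x, vnorm (vscal a x) = Rabs a * vnorm x;
  vnorm_triangle : forall x y, vnorm (vadd x y) <= vnorm x + vnorm y;
  vcomplete : forall u : nat -> vcar,
    (forall eps, 0 < eps -> exists N, forall n p, (N <= n)%nat -> (N <= p)%nat ->
        vnorm (vadd (u n) (vopp (u p))) < eps) ->
    exists l, forall eps, 0 < eps -> exists N, forall n, (N <= n)%nat ->
        vnorm (vadd (u n) (vopp l)) < eps
}.

Arguments vzero {_}. Arguments vadd {_}. Arguments vopp {_}.
Arguments vscal {_}. Arguments vnorm {_}.

Fixpoint fsum (N : nat) (f : nat -> R) : R :=
  match N with O => 0 | S n => fsum n f + f n end.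
Fixpoint fprod (N : nat) (f : nat -> R) : R :=
  match N with O => 1 | S n => fprod n f * f n end.

(* msum m N F = sum over all multi-indices (j_0,...,j_{m-1}) in {0..N-1}^m of F j *)
Fixpoint msum (m N : nat) (F : (nat -> nat) -> R) : R :=
  match m with
  | O => F (fun _ => O)
  | S m' => fsum N (fun j => msum m' N (fun J => F (fun i => if Nat.eqb i m' then j else J i)))
  end.

(* real power of a nonnegative base, with 0^y = 0 (used only for y > 0) *)
Definition rpow (x y : R) : R :=
  if Req_EM_T x 0 then 0 else Rpower x y.

Definition upd {X : Type} (u : nat -> X) (i : nat) (x : X) : nat -> X :=
  fun n => if Nat.eqb n i then x else u n.

Definition is_mlinear (X : RBanach) (m : nat) (A : (nat -> X) -> R) : Prop :=
  (forall u v : nat -> X, (forall i, (i < m)%nat -> u i = v i) -> A u = A v) /\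
  (forall (u : nat -> X) i a b (x y : X), (i < m)%nat ->
      A (upd u i (vadd (vscal a x) (vscal b y))) =
      a * A (upd u i x) + b * A (upd u i y)).

Definition is_symmetric (X : RBanach) (m : nat) (A : (nat -> X) -> R) : Prop :=
  forall (sigma : nat -> nat) (u : nat -> X),
    (forall i, (i < m)%nat -> (sigma i < m)%nat) ->
    (forall i j, (i < m)%nat -> (j < m)%nat -> sigma i = sigma j -> i = j) ->
    A (fun i => u (sigma i)) = A u.

(* continuity of an m-linear form = boundedness *)
Definition mlin_bounded (X : RBanach) (m : nat) (A : (nat -> X) -> R) : Prop :=
  exists C, forall u : nat -> X, Rabs (A u) <= C * fprod m (fun i => vnorm (u i)).

Definition is_polar_of (X : RBanach) (m : nat) (P : X -> R) (Pc : (nat -> X) -> R) : Prop :=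
  is_mlinear X m Pc /\ is_symmetric X m Pc /\ mlin_bounded X m Pc /\
  (forall x : X, Pc (fun _ => x) = P x).

Definition poly_norm_set (X : RBanach) (P : X -> R) : R -> Prop :=
  fun r => exists x : X, vnorm x <= 1 /\ r = Rabs (P x).

Definition dual_ball (X : RBanach) (phi : X -> R) : Prop :=
  (forall x y, phi (vadd x y) = phi x + phi y) /\
  (forall a x, phi (vscal a x) = a * phi x) /\
  (forall x, Rabs (phi x) <= vnorm x).

(* ||(x_j)_{j=1}^N||_{w,1} = sup_{phi in B_X'} sum_j |phi(x_j)|, x_j indexed 0..N-1 *)
Definition weak1_set (X : RBanach) (N : nat) (x : nat -> X) : R -> Prop :=
  fun r => exists phi, dual_ball X phi /\ r = fsum N (fun j => Rabs (phi (x j))).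

Definition BH_const (m : nat) (L : R) : Prop :=
  forall (X : RBanach) (P : X -> R) (Pc : (nat -> X) -> R),
    is_polar_of X m P Pc ->
    forall (N : nat) (x : nat -> nat -> X) (nP : R) (w : nat -> R),
      is_lub (poly_norm_set X P) nP ->
      (forall k, (k < m)%nat -> is_lub (weak1_set X N (x k)) (w k)) ->
      rpow (msum m N (fun J => rpow (Rabs (Pc (fun i => x i (J i))))
                                    (2 * INR m / (INR m + 1))))
           ((INR m + 1) / (2 * INR m))
      <= L * nP * fprod m w.

Definition Bcoef (k j : nat) : R :=
  fsum (S (Nat.div2 j)) (fun l =>
    if Nat.leb j (k + l) then
      INR (fact k) * (-3) ^ (j - 2 * l) /
      (INR (fact l) * INR (fact (j - 2 * l)) * INR (fact (k + l - j)))
    else 0).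

Definition lower_bound (k : nat) : R :=
  rpow (fsum (S (2 * k)) (fun j =>
          C (4 * k) (2 * j) *
          rpow (Rabs (Bcoef k j / C (4 * k) (2 * j))) (8 * INR k / (4 * INR k + 1))))
       ((4 * INR k + 1) / (8 * INR k)).

(* We test the defining inequality on the space linf2 = (R^2, max norm), with
   N = 2, all m = 4k sequences equal to the unit vectors (e0, e1), and
   P(x, y) = (x^4 + y^4 - 3 x^2 y^2)^k.
   - Expansion: applying the binomial theorem twice, Bcoef k j is the
     coefficient of X^j Y^(2k-j) in (X^2 + Y^2 - 3XY)^k ([Bcoef_expansion]).
   - Polarisation: esym l i, the coefficient of t^i in the product of the
     (b + t a) for (a, b) in l, is symmetric and multilinear in the m vectors of
     l, with diagonal binom m i x^i y^(m-i).  So any combination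
     [esym_form m c] of the esym _ i is the polar of its diagonal
     ([esym_form_polar]); for c = [test_coef k] the diagonal is P.
   - Norms: |X^2 + Y^2 - 3XY| <= 1 on [0,1]^2 with equality at (0, 1), so
     ||P|| = 1; the pair (e0, e1) has weak l1 norm 1.
   - Evaluation: at unit vectors esym only sees the number of e0's, so the
     left-hand sum is sum_i binom m i |c i|^p, which, odd coefficients being
     zero, is the sum defining [lower_bound k]. *)

From Stdlib Require Import Reals Lra Lia Factorial List Permutation FunctionalExtensionality.
Open Scope R_scope.

Lemma fsum_ext n f g : (forall i, (i < n)%nat -> f i = g i) -> fsum n f = fsum n g.
Proof.
  induction n as [|n IH]; simpl; intros H; [reflexivity|].
  rewrite IH, H by (try intros; try apply H; lia); reflexivity.
Qed.

Lemma fsum_plus n f g : fsum n (fun i => f i + g i) = fsum n f + fsum n g.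
Proof. induction n as [|n IH]; simpl; [ring|]. rewrite IH; ring. Qed.

Lemma fsum_scal_l n a f : fsum n (fun i => a * f i) = a * fsum n f.
Proof. induction n as [|n IH]; simpl; [ring|]. rewrite IH; ring. Qed.

Lemma fsum_scal_r n a f : fsum n (fun i => f i * a) = fsum n f * a.
Proof. induction n as [|n IH]; simpl; [ring|]. rewrite IH; ring. Qed.

Lemma fsum_zero n f : (forall i, (i < n)%nat -> f i = 0) -> fsum n f = 0.
Proof.
  induction n as [|n IH]; simpl; intros H; [reflexivity|].
  rewrite IH, H by (try intros; try apply H; lia); ring.
Qed.

Lemma fsum_shift p n f : fsum (p + n) f = fsum p f + fsum n (fun c => f (p + c)%nat).
Proof.
  induction n as [|n IH]; simpl; [rewrite Nat.add_0_r; ring|].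
  rewrite Nat.add_succ_r; simpl; rewrite IH; ring.
Qed.

Lemma fsum_trunc n m f : (n <= m)%nat -> (forall i, (n <= i < m)%nat -> f i = 0) ->
  fsum m f = fsum n f.
Proof.
  intros Hle H. replace m with (n + (m - n))%nat by lia.
  rewrite fsum_shift, (fsum_zero (m - n)); [ring|]. intros; apply H; lia.
Qed.

Lemma fsum_S n f : fsum (S n) f = f O + fsum n (fun i => f (S i)).
Proof. replace (S n) with (1 + n)%nat by lia. rewrite fsum_shift. simpl. ring. Qed.

Lemma fsum_swap n m (h : nat -> nat -> R) :
  fsum n (fun a => fsum m (fun j => h a j)) = fsum m (fun j => fsum n (fun a => h a j)).
Proof.
  induction n as [|n IH]; simpl; [rewrite fsum_zero; auto|].
  rewrite IH, <- fsum_plus. reflexivity.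
Qed.

Lemma fsum_f_R0 n f : sum_f_R0 f n = fsum (S n) f.
Proof. induction n as [|n IH]; simpl; [ring|]. rewrite IH. reflexivity. Qed.

Lemma fsum_even n f : (forall i, Nat.odd i = true -> f i = 0) ->
  fsum (S (2 * n)) f = fsum (S n) (fun j => f (2 * j)%nat).
Proof.
  intros H. induction n as [|n IH]; [simpl; ring|].
  replace (S (2 * S n)) with (S (S (S (2 * n)))) by lia.
  change (fsum (S (S (S (2 * n)))) f) with
    (fsum (S (2 * n)) f + f (S (2 * n)) + f (S (S (2 * n)))).
  rewrite IH, (H (S (2 * n))) by (rewrite <- Nat.add_1_r; apply Nat.odd_odd).
  change (fsum (S (S n)) (fun j => f (2 * j)%nat)) with
    (fsum (S n) (fun j => f (2 * j)%nat) + f (2 * S n)%nat).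
  replace (2 * S n)%nat with (S (S (2 * n))) by lia. ring.
Qed.

Lemma fsum_abs n f : Rabs (fsum n f) <= fsum n (fun i => Rabs (f i)).
Proof.
  induction n as [|n IH]; simpl; [rewrite Rabs_R0; lra|].
  eapply Rle_trans; [apply Rabs_triang|]. lra.
Qed.

Lemma fsum_le n f g : (forall i, (i < n)%nat -> f i <= g i) -> fsum n f <= fsum n g.
Proof. induction n as [|n IH]; simpl; intros H; [lra|]. apply Rplus_le_compat; auto. Qed.

Lemma fsum_delta n f r :
  fsum n (fun i => f i * (if Nat.eqb i r then 1 else 0)) = if Nat.ltb r n then f r else 0.
Proof.
  induction n as [|n IH]; simpl; [ring|]. rewrite IH.
  destruct (Nat.lt_total r n) as [H|[H|H]].
  - replace (Nat.ltb r n) with true by (symmetry; apply Nat.ltb_lt; lia).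
    replace (Nat.ltb r (S n)) with true by (symmetry; apply Nat.ltb_lt; lia).
    replace (Nat.eqb n r) with false by (symmetry; apply Nat.eqb_neq; lia). ring.
  - subst n. rewrite Nat.ltb_irrefl, Nat.eqb_refl.
    replace (Nat.ltb r (S r)) with true by (symmetry; apply Nat.ltb_lt; lia). ring.
  - replace (Nat.ltb r n) with false by (symmetry; apply Nat.ltb_ge; lia).
    replace (Nat.ltb r (S n)) with false by (symmetry; apply Nat.ltb_ge; lia).
    replace (Nat.eqb n r) with false by (symmetry; apply Nat.eqb_neq; lia). ring.
Qed.

Section Trinomial.
Variables (k : nat) (X Y : R).

(* The contribution of the term [C k a (X^2)^a (Y(Y-3X))^(k-a)] of the outer
   binomial expansion to the monomial [X^j Y^(2k-j)]. *)
Definition trinomial_term (a j : nat) : R :=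
  if andb (Nat.leb (2 * a) j) (Nat.leb j (k + a)) then
    INR (fact k) * (-3) ^ (j - 2 * a) /
      (INR (fact a) * INR (fact (j - 2 * a)) * INR (fact (k + a - j))) *
    (X ^ j * Y ^ (2 * k - j))
  else 0.

Lemma outer_term_expansion a : (a <= k)%nat ->
  C k a * (X ^ 2) ^ a * (Y * (-3 * X + Y)) ^ (k - a) =
  fsum (S (2 * k)) (fun j => trinomial_term a j).
Proof.
  intros Ha. rewrite Rpow_mult_distr, binomial, fsum_f_R0.
  rewrite (fsum_trunc (2 * a + S (k - a)) (S (2 * k))).
  2: lia.
  2:{ intros i Hi; unfold trinomial_term.
      replace (Nat.leb i (k + a)) with false by (symmetry; apply Nat.leb_gt; lia).
      now rewrite Bool.andb_false_r. }
  rewrite fsum_shift, (fsum_zero (2 * a)), Rplus_0_l.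
  2:{ intros i Hi; unfold trinomial_term.
      now replace (Nat.leb (2 * a) i) with false by (symmetry; apply Nat.leb_gt; lia). }
  rewrite <- !Rmult_assoc, <- fsum_scal_l.
  apply fsum_ext. intros c Hc. unfold trinomial_term.
  replace (Nat.leb (2 * a) (2 * a + c)) with true by (symmetry; apply Nat.leb_le; lia).
  replace (Nat.leb (2 * a + c) (k + a)) with true by (symmetry; apply Nat.leb_le; lia).
  simpl andb.
  replace (2 * a + c - 2 * a)%nat with c by lia.
  replace (k + a - (2 * a + c))%nat with (k - a - c)%nat by lia.
  replace (2 * k - (2 * a + c))%nat with ((k - a) + (k - a - c))%nat by lia.
  rewrite !pow_add, Rpow_mult_distr, <- pow_mult. unfold C.
  assert (H1 := INR_fact_neq_0 a). assert (H2 := INR_fact_neq_0 (k - a)).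
  assert (H3 := INR_fact_neq_0 c). assert (H4 := INR_fact_neq_0 (k - a - c)).
  field. auto.
Qed.

Lemma trinomial_column j : (j <= 2 * k)%nat ->
  fsum (S k) (fun a => trinomial_term a j) = Bcoef k j * (X ^ j * Y ^ (2 * k - j)).
Proof.
  intros Hj. unfold Bcoef. rewrite <- fsum_scal_r.
  assert (Hdiv2 := Nat.div2_odd j).
  assert (Hbit : (Nat.b2n (Nat.odd j) <= 1)%nat) by (destruct (Nat.odd j); simpl; lia).
  rewrite (fsum_trunc (S (Nat.div2 j)) (S k)).
  - apply fsum_ext. intros a Ha. unfold trinomial_term.
    replace (Nat.leb (2 * a) j) with true by (symmetry; apply Nat.leb_le; lia).
    simpl andb. destruct (Nat.leb j (k + a)); ring.
  - lia.
  - intros a Ha. unfold trinomial_term.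
    now replace (Nat.leb (2 * a) j) with false by (symmetry; apply Nat.leb_gt; lia).
Qed.

Lemma Bcoef_expansion :
  fsum (S (2 * k)) (fun j => Bcoef k j * (X ^ j * Y ^ (2 * k - j))) =
  (X ^ 2 + Y ^ 2 - 3 * X * Y) ^ k.
Proof.
  replace (X ^ 2 + Y ^ 2 - 3 * X * Y) with (X ^ 2 + Y * (-3 * X + Y)) by ring.
  rewrite binomial, fsum_f_R0.
  rewrite (fsum_ext (S k) _ (fun a => fsum (S (2 * k)) (fun j => trinomial_term a j)))
    by (intros a Ha; apply outer_term_expansion; lia).
  rewrite fsum_swap. apply fsum_ext. intros j Hj. symmetry. apply trinomial_column. lia.
Qed.

End Trinomial.

Definition linf2_norm (p : R * R) : R := Rmax (Rabs (fst p)) (Rabs (snd p)).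

Lemma linf2_cauchy_coords (u : nat -> R * R) :
  (forall eps, 0 < eps -> exists N, forall n p, (N <= n)%nat -> (N <= p)%nat ->
     linf2_norm (fst (u n) + - fst (u p), snd (u n) + - snd (u p)) < eps) ->
  Cauchy_crit (fun n => fst (u n)) /\ Cauchy_crit (fun n => snd (u n)).
Proof.
  intros H; split; intros eps He; destruct (H eps He) as [N HN]; exists N;
    intros n p Hn Hp; specialize (HN n p Hn Hp); unfold linf2_norm in HN; simpl in HN;
    unfold Rdist; eapply Rle_lt_trans; [apply Rmax_l | exact HN | apply Rmax_r | exact HN].
Qed.

Lemma Rabs_eq_R0 x : Rabs x = 0 -> x = 0.
Proof. intros H. destruct (Req_dec x 0); [assumption|]. now apply Rabs_no_R0 in H. Qed.

Lemma linf2_norm_eq0 p : linf2_norm p = 0 -> p = (0, 0).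
Proof.
  destruct p as [x y]; unfold linf2_norm; simpl; intros H.
  pose proof (Rmax_l (Rabs x) (Rabs y)). pose proof (Rmax_r (Rabs x) (Rabs y)).
  pose proof (Rabs_pos x). pose proof (Rabs_pos y).
  f_equal; apply Rabs_eq_R0; lra.
Qed.

Lemma linf2_norm_scal a p : linf2_norm (a * fst p, a * snd p) = Rabs a * linf2_norm p.
Proof. unfold linf2_norm; simpl. rewrite !Rabs_mult. apply RmaxRmult, Rabs_pos. Qed.

Definition linf2 : RBanach.
Proof.
  refine {| vcar := (R * R)%type; vzero := (0, 0);
            vadd := fun p q => (fst p + fst q, snd p + snd q);
            vopp := fun p => (- fst p, - snd p);
            vscal := fun a p => (a * fst p, a * snd p);
            vnorm := linf2_norm |};
    try (intros; repeat match goal with p : (R * R)%type |- _ => destruct p end;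
         simpl; f_equal; ring).
  - intros []; unfold linf2_norm; simpl. eapply Rle_trans; [apply Rabs_pos|apply Rmax_l].
  - exact linf2_norm_eq0.
  - exact linf2_norm_scal.
  - intros [x1 y1] [x2 y2]; unfold linf2_norm; simpl. apply Rmax_lub.
    + eapply Rle_trans; [apply Rabs_triang|]. apply Rplus_le_compat; apply Rmax_l.
    + eapply Rle_trans; [apply Rabs_triang|]. apply Rplus_le_compat; apply Rmax_r.
  - intros u H. destruct (linf2_cauchy_coords u H) as [H1 H2].
    destruct (R_complete _ H1) as [l1 Hl1]. destruct (R_complete _ H2) as [l2 Hl2].
    exists (l1, l2). intros eps He.
    destruct (Hl1 eps He) as [N1 HN1]. destruct (Hl2 eps He) as [N2 HN2].
    exists (Nat.max N1 N2). intros n Hn. unfold linf2_norm; simpl.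
    apply Rmax_lub_lt; [apply HN1 | apply HN2]; lia.
Defined.

(* [esym l i] is the coefficient of [t^i] in the product over [(a, b)] in [l]
   of [b + t a]: the sum over all [i]-element subsets of [l] of the product of
   first coordinates on the subset and second coordinates off it.  As a function
   of [m = length l] vectors it is symmetric and multilinear, and its diagonal is
   [binom m i * x^i * y^(m-i)]. *)
Fixpoint esym (l : list (R * R)) (i : nat) : R :=
  match l with
  | nil => if Nat.eqb i 0 then 1 else 0
  | p :: l' => snd p * esym l' i + match i with O => 0 | S i' => fst p * esym l' i' end
  end.

Lemma esym_perm l l' : Permutation l l' -> forall i, esym l i = esym l' i.
Proof.
  induction 1 as [|x l l' _ IH| |l l' l'' _ IH1 _ IH2]; intros i; simpl; try reflexivity.
  - destruct i; rewrite !IH; reflexivity.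
  - destruct i as [|[|i]]; ring.
  - rewrite IH1; auto.
Qed.

Lemma esym_linear l1 l2 a b x y i :
  esym (l1 ++ (a * fst x + b * fst y, a * snd x + b * snd y) :: l2) i =
  a * esym (l1 ++ x :: l2) i + b * esym (l1 ++ y :: l2) i.
Proof.
  revert i; induction l1 as [|p l1 IH]; intros i; simpl.
  - destruct i; simpl; ring.
  - destruct i; rewrite !IH; ring.
Qed.

Lemma esym_bound l i :
  Rabs (esym l i) <= 2 ^ (length l) * fold_right Rmult 1 (map linf2_norm l).
Proof.
  revert i; induction l as [|p l IH]; intros i; simpl.
  - destruct (Nat.eqb i 0); rewrite ?Rabs_R1, ?Rabs_R0; lra.
  - set (B := 2 ^ length l * fold_right Rmult 1 (map linf2_norm l)).
    assert (HB : 0 <= B) by (eapply Rle_trans; [apply Rabs_pos | apply (IH O)]).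
    assert (Hn1 : Rabs (fst p) <= linf2_norm p) by apply Rmax_l.
    assert (Hn2 : Rabs (snd p) <= linf2_norm p) by apply Rmax_r.
    assert (Hn0 : 0 <= linf2_norm p) by (pose proof (Rabs_pos (fst p)); lra).
    replace (2 * 2 ^ length l * (linf2_norm p * fold_right Rmult 1 (map linf2_norm l)))
      with (2 * (linf2_norm p * B)) by (unfold B; ring).
    eapply Rle_trans; [apply Rabs_triang|].
    assert (Rabs (snd p * esym l i) <= linf2_norm p * B)
      by (rewrite Rabs_mult; apply Rmult_le_compat; auto using Rabs_pos).
    assert (Rabs (match i with O => 0 | S i' => fst p * esym l i' end) <= linf2_norm p * B).
    { destruct i; [rewrite Rabs_R0; apply Rmult_le_pos; auto|].
      rewrite Rabs_mult. apply Rmult_le_compat; auto using Rabs_pos. }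
    lra.
Qed.

(* Binomial coefficients by Pascal's rule; unlike [C], [binom n i] vanishes for [i > n]. *)
Fixpoint binom (n i : nat) : R :=
  match n, i with
  | _, O => 1
  | O, S _ => 0
  | S n', S i' => binom n' i' + binom n' (S i')
  end.

Lemma binom_above n i : (n < i)%nat -> binom n i = 0.
Proof.
  revert i; induction n as [|n IH]; intros [|i] H; simpl; try lia; auto.
  rewrite !IH by lia. ring.
Qed.

Lemma binom_C n i : (i <= n)%nat -> binom n i = C n i.
Proof.
  revert i; induction n as [|n IH]; intros [|i] H.
  - unfold C; simpl; field.
  - lia.
  - unfold C; rewrite Nat.sub_0_r. change (binom (S n) 0) with 1.
    change (fact 0) with 1%nat. simpl (INR 1).
    field. apply INR_fact_neq_0.
  - simpl binom. destruct (Nat.eq_dec i n) as [->|Hn].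
    + rewrite (binom_above n (S n)), IH by lia. unfold C. rewrite !Nat.sub_diag.
      field. repeat split; apply INR_fact_neq_0.
    + rewrite !IH by lia. apply pascal. lia.
Qed.

Lemma esym_repeat a b n i : esym (repeat (a, b) n) i = binom n i * a ^ i * b ^ (n - i).
Proof.
  revert i; induction n as [|n IH]; intros i.
  - destruct i; simpl; ring.
  - simpl repeat. simpl esym. destruct i as [|i].
    + rewrite IH. replace (binom n 0) with 1 by (destruct n; reflexivity).
      rewrite Nat.sub_0_r. simpl. ring.
    + rewrite !IH. simpl binom. destruct (Nat.lt_ge_cases i n).
      * simpl. replace (n - i)%nat with (S (n - S i)) by lia. simpl. ring.
      * rewrite (binom_above n (S i)) by lia. simpl. ring.
Qed.

Lemma binom_pascal_sum n g :
  fsum (S (S n)) (fun i => binom (S n) i * g i) =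
  fsum (S n) (fun i => binom n i * g (S i)) + fsum (S n) (fun i => binom n i * g i).
Proof.
  rewrite fsum_S. simpl binom at 1.
  rewrite (fsum_ext (S n) (fun i => binom (S n) (S i) * g (S i))
             (fun i => binom n i * g (S i) + binom n (S i) * g (S i))) by (intros; simpl; ring).
  rewrite fsum_plus.
  assert (E : fsum (S n) (fun i => binom n i * g i) =
              g O + fsum (S n) (fun i => binom n (S i) * g (S i))).
  { change (fsum (S n) (fun i => binom n (S i) * g (S i))) with
      (fsum n (fun i => binom n (S i) * g (S i)) + binom n (S n) * g (S n)).
    rewrite (binom_above n (S n)), fsum_S by lia. destruct n; simpl; ring. }
  rewrite E. ring.
Qed.

Fixpoint count_zeros (l : list nat) : nat :=
  match l with
  | nil => O
  | j :: l' => ((if Nat.eqb j 0 then 1 else 0) + count_zeros l')%nat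
  end.

Lemma count_zeros_snoc l j :
  count_zeros (l ++ j :: nil) = (count_zeros l + (if Nat.eqb j 0 then 1 else 0))%nat.
Proof. induction l as [|a l IH]; simpl; [lia|]. rewrite IH; lia. Qed.

Lemma count_zeros_le l : (count_zeros l <= length l)%nat.
Proof. induction l as [|a l IH]; simpl; [lia|]. destruct (Nat.eqb a 0); lia. Qed.

Lemma msum_ext m N F G : (forall J, F J = G J) -> msum m N F = msum m N G.
Proof. intros H. f_equal. apply functional_extensionality; auto. Qed.

(* A function of the number of zeros summed over [{0,1}^m]: exactly [binom m i]
   multi-indices have [i] zeros. *)
Lemma msum_count_zeros m : forall h : nat -> R,
  msum m 2 (fun J => h (count_zeros (map J (seq 0 m)))) =
  fsum (S m) (fun i => binom m i * h i).
Proof.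
  induction m as [|m IH]; intros h; [simpl; ring|].
  assert (fsum_two : forall g, fsum 2 g = g 0%nat + g 1%nat) by (intros; simpl; ring).
  cbn [msum]. rewrite fsum_two.
  assert (Hcount : forall (j : nat) (J : nat -> nat),
            count_zeros (map (fun i => if Nat.eqb i m then j else J i) (seq 0 (S m))) =
            (count_zeros (map J (seq 0 m)) + (if Nat.eqb j 0 then 1 else 0))%nat).
  { intros j J. rewrite <- count_zeros_snoc, seq_S, map_app. simpl. rewrite Nat.eqb_refl.
    do 2 f_equal. apply map_ext_in. intros i Hi. apply in_seq in Hi.
    now replace (Nat.eqb i m) with false by (symmetry; apply Nat.eqb_neq; lia). }
  rewrite (msum_ext m 2
    (fun J => h (count_zeros (map (fun i => if Nat.eqb i m then 0%nat else J i) (seq 0 (S m)))))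
    (fun J => (fun c => h (S c)) (count_zeros (map J (seq 0 m)))))
    by (intros J; rewrite Hcount; simpl; f_equal; lia).
  rewrite (msum_ext m 2
    (fun J => h (count_zeros (map (fun i => if Nat.eqb i m then 1%nat else J i) (seq 0 (S m)))))
    (fun J => h (count_zeros (map J (seq 0 m)))))
    by (intros J; rewrite Hcount; simpl; f_equal; lia).
  rewrite (IH (fun c => h (S c))), IH, binom_pascal_sum. reflexivity.
Qed.

Definition esym_form (m : nat) (c : nat -> R) (u : nat -> vcar linf2) : R :=
  fsum (S m) (fun i => c i * esym (map u (seq 0 m)) i).

Lemma map_upd {A : Type} (u : nat -> A) i v m : (i < m)%nat ->
  map (upd u i v) (seq 0 m) = map u (seq 0 i) ++ v :: map u (seq (S i) (m - S i)).
Proof.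
  intros H. replace m with (i + S (m - S i))%nat at 1 by lia.
  rewrite seq_app, map_app. simpl. unfold upd at 2. rewrite Nat.eqb_refl.
  f_equal; [|f_equal]; apply map_ext_in; intros j Hj; apply in_seq in Hj; unfold upd;
    now replace (Nat.eqb j i) with false by (symmetry; apply Nat.eqb_neq; lia).
Qed.

Lemma fprod_fold m f : fold_right Rmult 1 (map f (seq 0 m)) = fprod m f.
Proof.
  assert (Hfold : forall l a, fold_right Rmult a l = fold_right Rmult 1 l * a)
    by (induction l as [|x l IH]; intros a; simpl; [ring | rewrite IH; ring]).
  induction m as [|m IH]; [reflexivity|].
  rewrite seq_S, map_app, fold_right_app, Hfold, IH. simpl. ring.
Qed.

Lemma esym_form_polar m c :
  is_polar_of linf2 m (fun x => esym_form m c (fun _ => x)) (esym_form m c).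
Proof.
  split; [split|split; [|split]].
  - intros u v H. unfold esym_form. apply fsum_ext. intros i _. do 2 f_equal.
    apply map_ext_in. intros j Hj. apply in_seq in Hj. apply H. lia.
  - intros u i a b x y Hi. unfold esym_form. rewrite !map_upd by exact Hi.
    change (vadd (vscal a x) (vscal b y)) with
      ((a * fst x + b * fst y, a * snd x + b * snd y) : vcar linf2).
    rewrite <- !fsum_scal_l, <- fsum_plus. apply fsum_ext. intros j _.
    rewrite esym_linear, Rmult_plus_distr_l, <- !Rmult_assoc, (Rmult_comm (c j) a),
      (Rmult_comm (c j) b). reflexivity.
  - intros sigma u Hs Hinj. unfold esym_form. apply fsum_ext. intros i _. f_equal.
    rewrite <- (map_map sigma u). apply esym_perm, Permutation_map.
    apply Permutation_map_same_l.
    + apply FinFun.Injective_map_NoDup_in; [|apply seq_NoDup].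
      intros x y Hx Hy. apply in_seq in Hx, Hy. apply Hinj; lia.
    + intros z Hz. apply in_map_iff in Hz. destruct Hz as [x [<- Hx]].
      apply in_seq in Hx. apply in_seq. specialize (Hs x ltac:(lia)). lia.
  - exists (fsum (S m) (fun i => Rabs (c i)) * 2 ^ m). intros u. unfold esym_form.
    eapply Rle_trans; [apply fsum_abs|].
    rewrite Rmult_assoc, <- fsum_scal_r. apply fsum_le. intros i _.
    rewrite Rabs_mult. apply Rmult_le_compat_l; [apply Rabs_pos|].
    eapply Rle_trans; [apply esym_bound|].
    rewrite length_map, length_seq, map_map, fprod_fold. apply Rle_refl.
  - reflexivity.
Qed.

Lemma esym_form_diag m c a b :
  esym_form m c (fun _ => (a, b)) = fsum (S m) (fun i => c i * (binom m i * a ^ i * b ^ (m - i))).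
Proof.
  unfold esym_form. rewrite map_const, length_seq.
  apply fsum_ext. intros i _. now rewrite esym_repeat.
Qed.

Definition unit_vec (j : nat) : vcar linf2 := if Nat.eqb j 0 then (1, 0) else (0, 1).

Lemma esym_unit_vecs l i :
  esym (map unit_vec l) i = if Nat.eqb i (count_zeros l) then 1 else 0.
Proof.
  revert i; induction l as [|a l IH]; intros i; simpl; auto.
  change (unit_vec a) with (if Nat.eqb a 0 then (1, 0) else (0, 1) : R * R).
  destruct (Nat.eqb a 0); simpl.
  - destruct i; simpl; rewrite ?IH; ring.
  - rewrite IH. destruct i; simpl; ring.
Qed.

Lemma msum_esym_form_unit_vecs m c (g : R -> R) :
  msum m 2 (fun J => g (esym_form m c (fun i => unit_vec (J i)))) =
  fsum (S m) (fun i => binom m i * g (c i)).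
Proof.
  rewrite <- (msum_count_zeros m (fun i => g (c i))). apply msum_ext. intros J.
  f_equal. unfold esym_form. rewrite <- map_map.
  rewrite (fsum_ext _ _ (fun i => c i * (if Nat.eqb i (count_zeros (map J (seq 0 m))) then 1 else 0)))
    by (intros i _; now rewrite esym_unit_vecs).
  rewrite fsum_delta.
  pose proof (count_zeros_le (map J (seq 0 m))). rewrite length_map, length_seq in H.
  now replace (Nat.ltb (count_zeros (map J (seq 0 m))) (S m)) with true
    by (symmetry; apply Nat.ltb_lt; lia).
Qed.

Definition test_coef (k i : nat) : R :=
  if Nat.even i then Bcoef k (Nat.div2 i) / C (4 * k) i else 0.

Lemma test_coef_odd k i : Nat.odd i = true -> test_coef k i = 0.
Proof. intros Hi. unfold test_coef. now rewrite <- Nat.negb_odd, Hi. Qed.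

Lemma test_coef_even k j : test_coef k (2 * j) = Bcoef k j / C (4 * k) (2 * j).
Proof. unfold test_coef. now rewrite Nat.even_even, Nat.div2_double. Qed.

Lemma C_neq0 n i : C n i <> 0.
Proof.
  unfold C, Rdiv. apply Rmult_integral_contrapositive_currified; [apply INR_fact_neq_0|].
  apply Rinv_neq_0_compat, Rmult_integral_contrapositive_currified; apply INR_fact_neq_0.
Qed.

Lemma test_poly_value k a b :
  esym_form (4 * k) (test_coef k) (fun _ => (a, b)) =
  ((a ^ 2) ^ 2 + (b ^ 2) ^ 2 - 3 * a ^ 2 * b ^ 2) ^ k.
Proof.
  rewrite esym_form_diag, <- (Bcoef_expansion k (a ^ 2) (b ^ 2)).
  replace (S (4 * k)) with (S (2 * (2 * k))) by lia.
  rewrite fsum_even by (intros i Hi; rewrite test_coef_odd by exact Hi; ring).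
  apply fsum_ext. intros j Hj. rewrite test_coef_even, binom_C by lia.
  replace (4 * k - 2 * j)%nat with (2 * (2 * k - j))%nat by lia.
  rewrite !pow_mult. field. apply C_neq0.
Qed.

Lemma trinomial_bound X Y : 0 <= X <= 1 -> 0 <= Y <= 1 ->
  Rabs (X ^ 2 + Y ^ 2 - 3 * X * Y) <= 1.
Proof.
  intros HX HY. apply Rabs_le. split.
  - pose proof (pow2_ge_0 (X - Y)). nra.
  - assert (0 <= (1 - X) * (1 - Y)) by nra. nra.
Qed.

Lemma sq_unit_interval a : Rabs a <= 1 -> 0 <= a ^ 2 <= 1.
Proof.
  intros H. rewrite <- (pow2_abs a). pose proof (Rabs_pos a). split; nra.
Qed.

Lemma pow_le1 x n : 0 <= x <= 1 -> x ^ n <= 1.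
Proof. intros H; induction n as [|n IH]; simpl; nra. Qed.

Lemma test_poly_norm k :
  is_lub (poly_norm_set linf2 (fun x => esym_form (4 * k) (test_coef k) (fun _ => x))) 1.
Proof.
  split.
  - intros r [[a b] [Hn ->]]. rewrite test_poly_value, <- RPow_abs.
    apply pow_le1. split; [apply Rabs_pos|].
    simpl in Hn. unfold linf2_norm in Hn; simpl in Hn.
    pose proof (Rmax_l (Rabs a) (Rabs b)). pose proof (Rmax_r (Rabs a) (Rabs b)).
    apply trinomial_bound; apply sq_unit_interval; lra.
  - intros B HB. apply HB. exists ((0, 1) : vcar linf2). split.
    + simpl. unfold linf2_norm; simpl. rewrite Rabs_R0, Rabs_R1, Rmax_right; lra.
    + rewrite test_poly_value. replace ((0 ^ 2) ^ 2 + (1 ^ 2) ^ 2 - 3 * 0 ^ 2 * 1 ^ 2) with 1 by ring.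
      now rewrite pow1, Rabs_R1.
Qed.

Lemma abs_sum_le a b M :
  (forall s t, Rabs s <= 1 -> Rabs t <= 1 -> s * a + t * b <= M) -> Rabs a + Rabs b <= M.
Proof.
  intros H.
  assert (Hp : Rabs 1 <= 1) by (rewrite Rabs_R1; lra).
  assert (Hm : Rabs (-1) <= 1) by (rewrite Rabs_left; lra).
  unfold Rabs; destruct (Rcase_abs a), (Rcase_abs b);
    [pose proof (H _ _ Hm Hm) | pose proof (H _ _ Hm Hp)
    | pose proof (H _ _ Hp Hm) | pose proof (H _ _ Hp Hp)]; lra.
Qed.

(* The pair of unit vectors has weak [l1] norm [1]: for a functional [phi] of norm
   at most [1], [s phi(e0) + t phi(e1) = phi(s, t)] with [|(s, t)| <= 1]. *)
Lemma unit_vecs_weak_norm : is_lub (weak1_set linf2 2 unit_vec) 1.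
Proof.
  split.
  - intros r [phi [[Hadd [Hsc Hb]] ->]]. simpl. rewrite Rplus_0_l.
    apply abs_sum_le. intros s t Hs Ht.
    rewrite <- (Hsc s), <- (Hsc t), <- Hadd.
    eapply Rle_trans; [apply Rle_abs|]. eapply Rle_trans; [apply Hb|].
    simpl. unfold linf2_norm; simpl. apply Rmax_lub.
    + now replace (s * 1 + t * 0) with s by ring.
    + now replace (s * 0 + t * 1) with t by ring.
  - intros B HB. apply HB. exists (fun v : vcar linf2 => fst v). split.
    + split; [|split]; [reflexivity | reflexivity |].
      intros [x y]. apply Rmax_l.
    + simpl. rewrite Rabs_R1, Rabs_R0. ring.
Qed.

Lemma fprod_one m : fprod m (fun _ => 1) = 1.
Proof. induction m as [|m IH]; simpl; [reflexivity|]. rewrite IH; ring. Qed.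

Lemma rpow0 p : rpow 0 p = 0.
Proof. unfold rpow. destruct (Req_EM_T 0 0); [reflexivity | contradiction]. Qed.

Lemma test_poly_lhs k p :
  msum (4 * k) 2 (fun J => rpow (Rabs (esym_form (4 * k) (test_coef k) (fun i => unit_vec (J i)))) p) =
  fsum (S (2 * k)) (fun j =>
    C (4 * k) (2 * j) * rpow (Rabs (Bcoef k j / C (4 * k) (2 * j))) p).
Proof.
  rewrite (msum_esym_form_unit_vecs _ _ (fun v => rpow (Rabs v) p)).
  replace (S (4 * k)) with (S (2 * (2 * k))) by lia.
  rewrite fsum_even
    by (intros i Hi; rewrite test_coef_odd, Rabs_R0, rpow0 by exact Hi; ring).
  apply fsum_ext. intros j Hj. now rewrite test_coef_even, binom_C by lia.
Qed.

Theorem mainTheorem6 (k : nat) (hk : (1 <= k)%nat) (L : R)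
  (HL : BH_const (4 * k) L) : lower_bound k <= L.
Proof.
  pose proof (HL linf2 _ _ (esym_form_polar (4 * k) (test_coef k)) 2%nat (fun _ => unit_vec)
                1 (fun _ => 1) (test_poly_norm k) (fun _ _ => unit_vecs_weak_norm)) as Hineq.
  cbv beta in Hineq. rewrite fprod_one, !Rmult_1_r, test_poly_lhs in Hineq.
  assert (Hkpos : 0 < INR k) by (apply lt_0_INR; lia).
  replace (2 * INR (4 * k) / (INR (4 * k) + 1)) with (8 * INR k / (4 * INR k + 1)) in Hineq
    by (rewrite mult_INR; simpl INR; field; lra).
  replace ((INR (4 * k) + 1) / (2 * INR (4 * k))) with ((4 * INR k + 1) / (8 * INR k)) in Hineq
    by (rewrite mult_INR; simpl INR; field; lra).
  exact Hineq.
Qed.
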